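(* For every joint distribution $F$ of buyer types $(\theta,v)$ and every $k$-step pricing scheme $p$, the expected revenue of $p$ is at most $k$ times the expected revenue of the optimal fixed-price scheme: $$\mathrm{Rev}_F(p)\le k\cdot\sup_{q}\, q\cdot\Pr_{(\theta,v)\sim F}[v\ge q].$$ Moreover, the factor $k$ is tight: for every $\delta>0$ there exist a distribution $F$ and a $k$-step pricing scheme $p$ with $\mathrm{Rev}_F(p)\ge (k-\delta)\sup_q q\Pr_F[v\ge q]$.
   Context: Model: a seller sells identical items in unlimited supply to unit-demand buyers with types $(\theta,v)$ drawn from a joint distribution $F$. Here $\theta\ge 0$ is the cost per unit time and $v$ the valuation. A pricing scheme is a non-increasing function $p:[0,\infty)\to\mathbb{R}$: spending time $t$ on the deal costs price $p(t)$. A buyer of type $(\theta,v)$ chooses $t^*(\theta)$, the smallest minimizer of $p(t)+\theta t$ over $t\ge0$, buys iff $p(t^*(\theta))+\theta t^*(\theta)\le v$, and then pays $p(t^*(\theta))$. The expected revenue is $\mathrm{Rev}_F(p)=\mathbb{E}_F[p(t^*(\theta))\,\mathbb{I}\{\theta t^*(\theta)+p(t^*(\theta))\le v\}]$. A fixed-price (posted-price) scheme is a constant $p\equiv q$, with revenue $q\Pr[v\ge q]$. A $k$-step pricing scheme is a non-increasing step function $p$ taking at most $k$ distinct price values. *)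

From HB Require Import structures.
From mathcomp Require Import all_boot all_order all_algebra.
From mathcomp Require Import all_classical all_reals all_analysis.
Set Implicit Arguments. Unset Strict Implicit. Unset Printing Implicit Defensive.
Import Order.TTheory GRing.Theory Num.Theory.
Local Open Scope classical_set_scope.
Local Open Scope ring_scope.

Section Pricing.
Variable R : realType.

(* a pricing scheme: non-increasing p on [0, oo) (values off [0,oo) are irrelevant) *)
Definition pricing_scheme (p : R -> R) : Prop :=
  forall s t : R, 0 <= s -> s <= t -> p t <= p s.

Definition kstep_scheme (k : nat) (p : R -> R) : Prop :=
  pricing_scheme p /\
  exists s : seq R, (size s <= k)%N /\ forall t : R, 0 <= t -> p t \in s.

Definition is_tstar (p : R -> R) (theta t : R) : Prop :=
  [/\ 0 <= t,
      (forall u, 0 <= u -> p t + theta * t <= p u + theta * u) &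
      (forall u, 0 <= u -> p u + theta * u <= p t + theta * t -> t <= u)].

(* the model presupposes that t*(theta) exists for every theta >= 0 *)
Definition tstar_exists (p : R -> R) : Prop :=
  forall theta : R, 0 <= theta -> exists t, is_tstar p theta t.

Definition tstar (p : R -> R) (theta : R) : R := xget 0 (is_tstar p theta).

Definition payment (p : R -> R) (x : R * R) : R :=
  let t := tstar p x.1 in
  if p t + x.1 * t <= x.2 then p t else 0.

Definition type_distribution (P : probability (R * R)%type R) : Prop :=
  P [set x | x.1 < 0] = 0%E.

Definition Rev (P : probability (R * R)%type R) (p : R -> R) : \bar R :=
  (\int[P]_x (payment p x)%:E)%E.

Definition opt_fixed_rev (P : probability (R * R)%type R) : \bar R :=
  ereal_sup [set (q%:E * P [set x | (q <= x.2)%R])%E | q in [set: R]].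

End Pricing.

From HB Require Import structures.
From mathcomp Require Import all_boot all_order all_algebra.
From mathcomp Require Import all_classical all_reals all_analysis.
From mathcomp Require Import ring lra.
Import Order.TTheory GRing.Theory Num.Theory measurable_realfun.
Set Implicit Arguments. Unset Strict Implicit. Unset Printing Implicit Defensive.
Local Open Scope classical_set_scope.
Local Open Scope ring_scope.

(* A buyer who pays q = p(t* ) has v >= q + theta t* >= q, so the payment is
   dominated by the simple function sum_q q 1[v >= q], q ranging over the at
   most k prices of p; integrating gives Rev <= k opt.
   For tightness, fix M >= 2 and let the price be M^-j from time (M+1)^j - 1
   on (j < k). Buyer j, of weight proportional to M^j, has time cost
   M^-j / (M (M+1)^j) and value (1 + 1/M) M^-j: earlier steps are too
   expensive for him and waiting longer costs more than it saves, so he pays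
   M^-j. Every step thus earns 1 / sum_j M^j, and Rev = k / sum_j M^j, while
   a fixed price q only sells to a prefix of the buyers (values decrease
   geometrically) and earns at most (M+1) / ((M-1) sum_j M^j). The ratio
   k (M-1) / (M+1) tends to k. *)

Section integral_lemmas.
Context d (T : measurableType d) (R : realType) (mu : {measure set T -> \bar R}).

(* No measurability is needed (payments are not known to be measurable): the
   integral of a nonnegative function is the supremum of the integrals of the
   simple functions below it. *)
Lemma ge0_le_integralT (f g : T -> \bar R) :
  (forall x, 0 <= f x)%E -> (forall x, f x <= g x)%E ->
  (\int[mu]_x f x <= \int[mu]_x g x)%E.
Proof.
move=> f0 fg; have g0 x : (0 <= g x)%E by exact: le_trans (f0 x) (fg x).
rewrite !ge0_integralTE //; apply: ereal_sup_le => _ /= [h hf <-].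
by exists h => //= x; exact: le_trans (hf x) (fg x).
Qed.

Lemma indic_ge0 (A : set T) x : 0 <= \1_A x :> R.
Proof. by rewrite indicE; case: (_ \in _). Qed.

Lemma integral_scale_indic (c : R) (A : set T) : 0 <= c -> measurable A ->
  (\int[mu]_x (c * \1_A x)%:E = c%:E * mu A)%E.
Proof.
move=> c0 mA; under eq_integral do rewrite EFinM.
rewrite ge0_integralZl //; first by rewrite integral_indic // setIT.
by apply/measurable_EFinP; exact: measurable_indic.
Qed.

End integral_lemmas.

Section upper_bound.
Variable R : realType.

Lemma measurable_snd_ge (q : R) : measurable [set x : R * R | q <= x.2].
Proof.
have -> : [set x : R * R | q <= x.2] = setT `&` (snd @^-1` `[q, +oo[%classic).
  by apply/seteqP; split => x /=; rewrite ?in_itv /= ?andbT //; case.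
exact: measurable_snd (measurable_itv _).
Qed.

Lemma measurable_fst_lt0 : measurable [set x : R * R | x.1 < 0].
Proof.
have -> : [set x : R * R | x.1 < 0] = setT `&` (fst @^-1` `]-oo, 0[%classic).
  by apply/seteqP; split => x /=; rewrite ?in_itv /= ?andbT //; case.
exact: measurable_fst (measurable_itv _).
Qed.

Lemma measurable_pair1 (x : R * R) : measurable [set x].
Proof.
have -> : [set x] = [set x.1] `*` [set x.2].
  by apply/seteqP; split => [y /= -> | [a b] /= [-> ->]] //; case: x.
by apply: measurableX; exact: measurable_set1.
Qed.

Lemma tstar_ge0 (p : R -> R) theta : 0 <= tstar p theta.
Proof. by rewrite /tstar; case: xgetP => // t _ []. Qed.

Lemma tstar_eq (p : R -> R) theta t : is_tstar p theta t -> tstar p theta = t.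
Proof.
move=> [t0 tmin tsmall]; rewrite /tstar; case: xgetP => [u _ [u0 umin usmall]|].
  by apply: le_anti; rewrite usmall ?tmin // tsmall ?umin.
by move=> /(_ t); case.
Qed.

(* Adding the null set [theta < 0] makes the bound on the payment hold everywhere. *)
Definition buys_or_negative (q : R) :=
  [set x : R * R | q <= x.2] `|` [set x | x.1 < 0].

Lemma payment_le_sum_prices (p : R -> R) (s : seq R) x :
  (forall t, 0 <= t -> p t \in s) ->
  payment p x <= \sum_(q <- s) Num.max q 0 * \1_(buys_or_negative q) x.
Proof.
move=> ps; have F0 q : 0 <= Num.max q 0 * \1_(buys_or_negative q) x.
  by rewrite mulr_ge0 ?le_max ?lexx ?orbT ?indic_ge0.
rewrite /payment; set t := tstar p x.1; case: ifPn => [buy|_]; last exact: sumr_ge0.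
have x_buys : buys_or_negative (p t) x.
  have [|th0] := ltP x.1 0; [by right | left].
  by apply: le_trans buy; rewrite lerDl mulr_ge0 // tstar_ge0.
rewrite (big_rem (p t)) ?ps ?tstar_ge0 //= indicE mem_set // mulr1.
have : p t <= Num.max (p t) 0 by rewrite le_max lexx.
have : 0 <= \sum_(q <- rem (p t) s) Num.max q 0 * \1_(buys_or_negative q) x.
  exact: sumr_ge0.
lra.
Qed.

Lemma Rev_le_sum_prices (P : probability (R * R)%type R) (p : R -> R) (s : seq R) :
  type_distribution P -> (forall t, 0 <= t -> p t \in s) ->
  (Rev P p <= \sum_(q <- s) (Num.max q 0)%:E * P [set x | (q <= x.2)%R])%E.
Proof.
move=> P_neg0 ps; have q0 (q : R) : 0 <= Num.max q 0 by rewrite le_max lexx orbT.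
have mB q : measurable (buys_or_negative q).
  exact: measurableU (measurable_snd_ge q) measurable_fst_lt0.
apply: (@le_trans _ _ (\int[P]_x ((fun x => (payment p x)%:E)^\+ x))%E).
  rewrite /Rev integralE geeDl // oppe_le0.
  by apply: integral_ge0 => x _; exact: funeneg_ge0.
apply: (@le_trans _ _
    (\int[P]_x (\sum_(q <- s) Num.max q 0 * \1_(buys_or_negative q) x)%R%:E)%E).
  apply: ge0_le_integralT => x; first exact: funepos_ge0.
  rewrite funeposE -EFin_max lee_fin ge_max payment_le_sum_prices //=.
  by apply: sumr_ge0 => q _; rewrite mulr_ge0 ?indic_ge0.
under eq_integral do rewrite -sumEFin.
rewrite ge0_integral_sum //; last first.
- by move=> q x _; rewrite lee_fin mulr_ge0 ?indic_ge0.
- move=> q; apply/measurable_EFinP.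
  by apply: measurable_funM; [exact: measurable_cst | exact: measurable_indic (mB q)].
apply: lee_sum => q _; rewrite integral_scale_indic //.
by rewrite measureU0 //; [exact: measurable_snd_ge | exact: measurable_fst_lt0].
Qed.

Lemma opt_fixed_rev_ge0 (P : probability (R * R)%type R) : (0 <= opt_fixed_rev P)%E.
Proof. by apply: ereal_sup_ubound; exists 0 => //; rewrite mul0e. Qed.

Lemma fixed_price_rev_le_opt (P : probability (R * R)%type R) (q : R) :
  ((Num.max q 0)%:E * P [set x | (q <= x.2)%R] <= opt_fixed_rev P)%E.
Proof.
have [q0|q0] := ltP 0 q; last by rewrite mul0e opt_fixed_rev_ge0.
by apply: ereal_sup_ubound; exists q.
Qed.

Lemma Rev_le_kstep_opt (k : nat) (P : probability (R * R)%type R) (p : R -> R) :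
  type_distribution P -> kstep_scheme k p -> (Rev P p <= k%:R%:E * opt_fixed_rev P)%E.
Proof.
move=> P_neg0 [_ [s [sk ps]]]; apply: le_trans (Rev_le_sum_prices P_neg0 ps) _.
apply: (@le_trans _ _ (\sum_(q <- s) opt_fixed_rev P)%E).
  by apply: lee_sum => q _; exact: fixed_price_rev_le_opt.
rewrite big_const_seq count_predT iter_addr_0 -[X in (X <= _)%E]mule_natl.
by apply: lee_wpmul2r; [exact: opt_fixed_rev_ge0 | rewrite lee_fin ler_nat].
Qed.

End upper_bound.

Section discrete_probability.
Context d (T : measurableType d) (R : realType).
Variables (w : nat -> {nonneg R}) (a : nat -> T) (n : nat).

Definition discrete_prob : probability T R :=
  mnormalize (msum (fun i => mscale (w i) \d_(a i)) n) \d_(a 0%N).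

Hypothesis w_gt0 : 0 < \sum_(i < n) (w i)%:num.

Lemma discrete_probE U : discrete_prob U =
  ((\sum_(i < n) (w i)%:num * \1_U (a i)) / \sum_(i < n) (w i)%:num)%:E.
Proof.
have muE V : (msum (fun i => mscale (w i) \d_(a i)) n : {measure set T -> \bar R}) V =
    (\sum_(i < n) (w i)%:num * \1_V (a i))%:E.
  by rewrite /msum /= -sumEFin; apply: eq_bigr => j _; rewrite EFinM -diracE.
have total : \sum_(i < n) (w i)%:num * \1_[set: T] (a i) = \sum_(i < n) (w i)%:num.
  by apply: eq_bigr => i _; rewrite indicE in_setT mulr1.
by rewrite /discrete_prob /= /mnormalize !muE total eqe gt_eqF //= muE -EFinM.
Qed.

Lemma discrete_prob_set1 i : injective a -> (i < n)%N ->
  discrete_prob [set a i] = ((w i)%:num / \sum_(j < n) (w j)%:num)%:E.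
Proof.
move=> a_inj ni; rewrite discrete_probE (bigD1 (Ordinal ni)) //= indicE mem_set //.
rewrite big1 ?mulr1 ?addr0 // => j ji; rewrite indicE memNset ?mulr0 //= => /a_inj ij.
by move: ji; rewrite -val_eqE /= ij eqxx.
Qed.

End discrete_probability.

Section step_scheme.
Variables (R : realType) (k : nat) (T c : nat -> R).
Hypotheses (k_gt0 : (0 < k)%N) (T0 : T 0%N = 0)
  (T_lt : {homo T : i j / (i < j)%N >-> i < j})
  (c_le : {homo c : i j / (i <= j)%N >-> j <= i}).

Definition step_index (u : R) : nat := \max_(j < k | T j <= u) j.

Definition step_scheme (u : R) : R := c (step_index u).

Let T_le : {mono T : i j / (i <= j)%N >-> i <= j}.
Proof. exact: le_mono. Qed.

Lemma step_index_lt u : (step_index u < k)%N.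
Proof.
rewrite -(prednK k_gt0) ltnS; apply/bigmax_leqP => j _.
by rewrite -ltnS prednK.
Qed.

Lemma step_index_le s t : s <= t -> (step_index s <= step_index t)%N.
Proof.
move=> st; apply/bigmax_leqP => j Tjs.
exact: (@leq_bigmax_cond _ (fun l : 'I_k => T l <= t) (fun l => nat_of_ord l) j
  (le_trans Tjs st)).
Qed.

Lemma step_index_T j : (j < k)%N -> step_index (T j) = j.
Proof.
move=> jk; apply/eqP; rewrite eqn_leq; apply/andP; split.
  by apply/bigmax_leqP => l; rewrite T_le.
exact: (@leq_bigmax_cond _ (fun l : 'I_k => T l <= T j) (fun l => nat_of_ord l)
  (Ordinal jk)).
Qed.

Lemma T_step_index u : 0 <= u -> T (step_index u) <= u.
Proof.
move=> u0; have nonempty : (0 < #|[pred j : 'I_k | (T j <= u)%R]|)%N.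
  by apply/card_gt0P; exists (Ordinal k_gt0); rewrite inE /= T0.
have [j Tju idx] := eq_bigmax_cond (fun j : 'I_k => nat_of_ord j) nonempty.
suff -> : step_index u = j by move: Tju; rewrite inE.
by rewrite -idx; apply: eq_bigl => l; rewrite inE.
Qed.

Lemma step_scheme_T j : (j < k)%N -> step_scheme (T j) = c j.
Proof. by move=> jk; rewrite /step_scheme step_index_T. Qed.

Lemma kstep_step_scheme : kstep_scheme k step_scheme.
Proof.
split=> [s t _ st|]; first by apply: c_le; exact: step_index_le.
exists [seq c j | j <- iota 0 k]; rewrite size_map size_iota; split=> // t _.
by apply: map_f; rewrite mem_iota step_index_lt.
Qed.

Lemma is_tstar_step_scheme theta j : 0 <= theta -> (j < k)%N ->
  (forall l, (l < k)%N -> c j + theta * T j <= c l + theta * T l) ->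
  (forall l, (l < j)%N -> c j + theta * T j < c l + theta * T l) ->
  is_tstar step_scheme theta (T j).
Proof.
move=> th0 jk jmin jfirst.
have index_cost u : 0 <= u ->
    c (step_index u) + theta * T (step_index u) <= step_scheme u + theta * u.
  by move=> u0; rewrite lerD2l ler_wpM2l // T_step_index.
split=> [|u u0|u u0]; first by rewrite -T0 T_le.
  by rewrite step_scheme_T //; apply: le_trans (index_cost u u0); exact/jmin/step_index_lt.
rewrite step_scheme_T // => hu; apply: le_trans (T_step_index u0).
rewrite T_le leqNgt; apply/negP => /jfirst; apply/negP; rewrite -leNgt.
exact: le_trans (index_cost u u0) hu.
Qed.

Lemma tstar_exists_step_scheme : tstar_exists step_scheme.
Proof.
move=> theta th0; pose cost l := c l + theta * T l.
pose j0 : 'I_k := [arg min_(l < Ordinal k_gt0) cost l]%O.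
have j0min l : (l < k)%N -> cost j0 <= cost l.
  by move=> lk; rewrite /j0; case: arg_minP => // i _ /(_ (Ordinal lk)); apply.
have ex : exists l, (l < k)%N && (cost l <= cost j0) by exists j0; rewrite ltn_ord lexx.
case: (ex_minnP ex) => j /andP[jk cj] jsmall.
exists (T j); apply: is_tstar_step_scheme => // l lj.
  exact: le_trans cj (j0min l lj).
rewrite ltNge; apply/negP => clj.
have : (j <= l)%N by apply: jsmall; rewrite (ltn_trans lj jk) (le_trans clj cj).
by rewrite leqNgt lj.
Qed.

End step_scheme.

Section tight_instance.
Variables (R : realType) (M : R) (k : nat).
Hypotheses (M_ge2 : 2 <= M) (k_gt0 : (0 < k)%N).

Definition tight_price (j : nat) : R := M^-1 ^+ j.
Definition tight_time (j : nat) : R := (M + 1) ^+ j - 1.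
Definition tight_cost (j : nat) : R := tight_price j / (M * (M + 1) ^+ j).
Definition tight_value (j : nat) : R := (M + 1) / M * tight_price j.
Definition tight_buyer (j : nat) : R * R := (tight_cost j, tight_value j).
Definition tight_scheme : R -> R := step_scheme k tight_time tight_price.

Let M_gt1 : 1 < M. Proof. by apply: lt_le_trans M_ge2; rewrite ltr1n. Qed.
Let M_gt0 : 0 < M. Proof. exact: lt_trans M_gt1. Qed.
Let Mexp_neq0 j : (M + 1) ^+ j != 0.
Proof. by rewrite expf_neq0 // gt_eqF // addr_gt0. Qed.

Lemma tight_time0 : tight_time 0 = 0.
Proof. by rewrite /tight_time expr0 subrr. Qed.

Lemma tight_time_lt : {homo tight_time : i j / (i < j)%N >-> i < j}.
Proof. by move=> i j ij; rewrite ltrD2r ltr_eXn2l // ltrDr. Qed.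

Lemma tight_time_ge0 j : 0 <= tight_time j.
Proof. by rewrite -tight_time0 (le_mono tight_time_lt). Qed.

Lemma tight_price_gt0 j : 0 < tight_price j.
Proof. by rewrite exprn_gt0 // invr_gt0. Qed.

Lemma tight_price_le : {homo tight_price : i j / (i <= j)%N >-> j <= i}.
Proof. by move=> i j ij; rewrite ler_wiXn2l // ?invr_ge0 ?(ltW M_gt0) // invf_le1 // ltW. Qed.

Lemma tight_cost_ge0 j : 0 <= tight_cost j.
Proof.
have M_ge0 := ltW M_gt0; apply: divr_ge0; first exact: ltW (tight_price_gt0 j).
by rewrite mulr_ge0 ?exprn_ge0 ?addr_ge0.
Qed.

Lemma tight_cost_time j :
  tight_cost j * tight_time j = tight_price j / M - tight_cost j.
Proof. by rewrite /tight_cost /tight_time; field; rewrite Mexp_neq0 gt_eqF. Qed.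

Lemma tight_cost_timeS j :
  tight_cost j * tight_time j.+1 = tight_cost j * tight_time j + tight_price j.
Proof. by rewrite /tight_cost /tight_time exprS; field; rewrite Mexp_neq0 gt_eqF. Qed.

Lemma tight_priceS j : M * tight_price j.+1 = tight_price j.
Proof. by rewrite /tight_price exprS mulrA divff ?mul1r // gt_eqF. Qed.

Lemma tight_cost_lt j l : (l < j)%N ->
  tight_price j + tight_cost j * tight_time j < tight_price l + tight_cost j * tight_time l.
Proof.
move=> lj; have [i ji] : exists i, j = i.+1 by exists j.-1; rewrite prednK // (leq_ltn_trans _ lj).
have price_il : tight_price i <= tight_price l by apply: tight_price_le; rewrite -ltnS -ji.
rewrite tight_cost_time ji -(tight_priceS i) in price_il *.
set c := tight_price i.+1 in price_il *; have c_gt0 : 0 < c := tight_price_gt0 i.+1.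
have cM_lt : c / M < c by rewrite gtr_pMr // invf_lt1.
have c2_le : 2 * c <= M * c by rewrite ler_wpM2r // ltW.
have := tight_cost_ge0 i.+1; have := mulr_ge0 (tight_cost_ge0 i.+1) (tight_time_ge0 l).
(* c + c / M - cost < 2 c <= M c = price i <= price l *)
lra.
Qed.

Lemma tight_cost_le j l : (j <= l)%N ->
  tight_price j + tight_cost j * tight_time j <= tight_price l + tight_cost j * tight_time l.
Proof.
rewrite leq_eqVlt => /orP[/eqP-> //|jl].
rewrite [X in X <= _]addrC -tight_cost_timeS.
apply: (@le_trans _ _ (tight_cost j * tight_time l)).
  by rewrite ler_wpM2l ?tight_cost_ge0 // (le_mono tight_time_lt).
by rewrite lerDr ltW ?tight_price_gt0.
Qed.

Lemma tight_buyer_tstar j : (j < k)%N -> tstar tight_scheme (tight_cost j) = tight_time j.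
Proof.
move=> jk; apply: tstar_eq; apply: is_tstar_step_scheme => //.
- exact: tight_time0.
- exact: tight_time_lt.
- exact: tight_cost_ge0.
- by move=> l _; case: (ltnP l j) => [/tight_cost_lt/ltW|/tight_cost_le].
- by move=> l /tight_cost_lt.
Qed.

Lemma tight_payment j : (j < k)%N -> payment tight_scheme (tight_buyer j) = tight_price j.
Proof.
move=> jk; rewrite /payment /= tight_buyer_tstar // /tight_scheme.
rewrite (step_scheme_T _ tight_time_lt) // ifT // tight_cost_time /tight_value.
have -> : (M + 1) / M * tight_price j = tight_price j + tight_price j / M.
  by field; rewrite gt_eqF.
by rewrite lerD2l gerBl tight_cost_ge0.
Qed.

Lemma tight_payment_ge0 x : 0 <= payment tight_scheme x.
Proof. by rewrite /payment; case: ifP => // _; exact: ltW (tight_price_gt0 _). Qed.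

Lemma tight_value_le : {homo tight_value : i j / (i <= j)%N >-> j <= i}.
Proof. by move=> i j ij; rewrite ler_wpM2l ?tight_price_le // divr_ge0 ?addr_ge0 ?ltW. Qed.

Lemma tight_value_mul j : tight_value j * M ^+ j.+1 = M + 1.
Proof.
rewrite /tight_value /tight_price exprS exprVn; field.
by rewrite expf_neq0 gt_eqF.
Qed.

Lemma tight_buyer_inj : injective tight_buyer.
Proof.
move=> i j [_ /mulfI]; rewrite mulf_neq0 ?invr_eq0 ?gt_eqF ?addr_gt0 // => /(_ isT).
by apply: ieexprIn; rewrite ?invr_gt0 ?invr_eq1 ?gt_eqF.
Qed.

Lemma tight_fixed_price_mass q n : 0 < q ->
  q * (\sum_(j < n | q <= tight_value j) M ^+ j) * (M - 1) <= M + 1.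
Proof.
move=> q_gt0; elim: n => [|n IH]; first by rewrite big_ord0 mulr0 mul0r addr_ge0 ?ltW.
rewrite big_mkcond big_ord_recr /= -big_mkcond; case: ifPn => [qv|_]; last by rewrite addr0.
have -> : \sum_(j < n | q <= tight_value j) M ^+ j = \sum_(j < n) M ^+ j.
  by apply: eq_bigl => j; rewrite (le_trans qv) // tight_value_le // ltnW.
have geom := subrX1 M n.+1; rewrite big_ord_recr /= in geom.
have := ler_wpM2r (exprn_ge0 n.+1 (ltW M_gt0)) qv; rewrite tight_value_mul.
rewrite -mulrA (mulrC _ (M - 1)) -geom mulrBr mulr1; lra.
Qed.

Definition tight_weight (j : nat) : {nonneg R} :=
  NngNum (exprn_ge0 j (le_trans (ler0n R 2) M_ge2)).

Definition tight_distribution : probability (R * R)%type R :=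
  discrete_prob tight_weight tight_buyer k.

Lemma tight_weight_sum_gt0 : 0 < \sum_(j < k) M ^+ j.
Proof.
rewrite (bigD1 (Ordinal k_gt0)) //= expr0.
have : 0 <= \sum_(j < k | j != Ordinal k_gt0) M ^+ j.
  by apply: sumr_ge0 => j _; rewrite exprn_ge0 // ltW.
lra.
Qed.

Lemma tight_distributionE U : tight_distribution U =
  ((\sum_(j < k) M ^+ j * \1_U (tight_buyer j)) / \sum_(j < k) M ^+ j)%:E.
Proof. exact: (discrete_probE (w := tight_weight) _ tight_weight_sum_gt0). Qed.

Lemma tight_distribution_buyer j : (j < k)%N ->
  tight_distribution [set tight_buyer j] = (M ^+ j / \sum_(i < k) M ^+ i)%:E.
Proof. exact: (discrete_prob_set1 (w := tight_weight) tight_weight_sum_gt0 tight_buyer_inj). Qed.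

Lemma Rev_tight_ge :
  ((k%:R / \sum_(j < k) M ^+ j)%:E <= Rev tight_distribution tight_scheme)%E.
Proof.
pose G x := \sum_(j < k) tight_price j * \1_[set tight_buyer j] x.
have G_le x : G x <= payment tight_scheme x.
  have [[j ->]|not_buyer] := pselect (exists j : 'I_k, x = tight_buyer j); last first.
    rewrite /G big1 ?tight_payment_ge0 // => j _.
    by rewrite indicE memNset ?mulr0 // => xj; apply: not_buyer; exists j.
  rewrite /G (bigD1 j) //= indicE mem_set // mulr1 big1 ?addr0 ?tight_payment //.
  move=> i ij; rewrite indicE memNset ?mulr0 //= => /tight_buyer_inj/val_inj ji.
  by rewrite ji eqxx in ij.
have price_weight j : tight_price j * M ^+ j = 1.
  by rewrite /tight_price -exprMn mulVf ?expr1n ?gt_eqF.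
have int_G : (\int[tight_distribution]_x (G x)%:E =
    (k%:R / \sum_(j < k) M ^+ j)%:E)%E.
  under eq_integral do rewrite -sumEFin.
  rewrite ge0_integral_sum //; first last.
  - by move=> j x _; rewrite lee_fin mulr_ge0 ?indic_ge0 ?ltW ?tight_price_gt0.
  - move=> j; apply/measurable_EFinP; apply: measurable_funM => //.
    exact: measurable_indic (measurable_pair1 _).
  rewrite (eq_bigr (fun=> ((\sum_(i < k) M ^+ i)^-1)%:E)).
    by rewrite sumEFin sumr_const card_ord mulr_natl.
  move=> j _; rewrite integral_scale_indic ?ltW ?tight_price_gt0 //; last exact: measurable_pair1.
  set mass := (X in (_ * X)%E).
  have -> : mass = (M ^+ j / \sum_(i < k) M ^+ i)%:E by exact: tight_distribution_buyer.
  by rewrite -EFinM mulrA price_weight mul1r.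
rewrite -int_G; apply: ge0_le_integralT => x; rewrite lee_fin //.
by apply: sumr_ge0 => j _; rewrite mulr_ge0 ?indic_ge0 ?ltW ?tight_price_gt0.
Qed.

Lemma type_distribution_tight : type_distribution tight_distribution.
Proof.
rewrite /type_distribution tight_distributionE big1 ?mul0r // => j _.
by rewrite indicE memNset ?mulr0 //=; apply/negP; rewrite -leNgt tight_cost_ge0.
Qed.

Lemma opt_tight_le : (opt_fixed_rev tight_distribution <=
  ((M + 1) / ((M - 1) * \sum_(j < k) M ^+ j))%:E)%E.
Proof.
have S_gt0 := tight_weight_sum_gt0; have M1_gt0 : 0 < M - 1 by rewrite subr_gt0.
apply: ge_ereal_sup => _ [q _ <-]; have [q_le0|q_gt0] := leP q 0.
  apply: (@le_trans _ _ 0%E); first by apply: mule_le0_ge0; rewrite ?lee_fin.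
  by rewrite lee_fin divr_ge0 ?addr_ge0 ?mulr_ge0 ?ltW.
rewrite tight_distributionE -EFinM lee_fin.
have -> : \sum_(j < k) M ^+ j * \1_[set x : R * R | q <= x.2] (tight_buyer j) =
    \sum_(j < k | q <= tight_value j) M ^+ j.
  rewrite [RHS]big_mkcond; apply: eq_bigr => j _; rewrite indicE.
  have [qv|qv] := boolP (q <= tight_value j); first by rewrite mem_set ?mulr1.
  by rewrite memNset ?mulr0 //=; exact/negP.
rewrite ler_pdivlMr ?mulr_gt0 //; set mass := \sum_(j < k | _) _.
have -> : q * (mass / \sum_(j < k) M ^+ j) * ((M - 1) * \sum_(j < k) M ^+ j) =
    q * mass * (M - 1) by field; rewrite gt_eqF.
exact: tight_fixed_price_mass.
Qed.

Lemma opt_tight_gt0 : (0 < opt_fixed_rev tight_distribution)%E.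
Proof.
pose q := tight_value 0.
have buyer0 : [set tight_buyer 0] `<=` [set x : R * R | q <= x.2] by move=> x /= ->.
have q_gt0 : 0 < q by rewrite /q mulr_gt0 ?divr_gt0 ?addr_gt0 ?tight_price_gt0.
apply: (@lt_le_trans _ _ (q%:E * tight_distribution [set tight_buyer 0%N])%E).
  by rewrite tight_distribution_buyer // -EFinM lte_fin mulr_gt0 ?divr_gt0 ?exprn_gt0 ?tight_weight_sum_gt0.
apply: le_trans (ereal_sup_ubound _); last by exists q.
apply: lee_wpmul2l; first by rewrite lee_fin ltW.
by apply: le_measure buyer0; rewrite inE; [exact: measurable_pair1 | exact: measurable_snd_ge].
Qed.

Lemma tight_Rev_ratio : ((k%:R * (M - 1) / (M + 1))%:E * opt_fixed_rev tight_distribution <=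
  Rev tight_distribution tight_scheme)%E.
Proof.
have S_gt0 := tight_weight_sum_gt0; have M1_gt0 : 0 < M - 1 by rewrite subr_gt0.
have ratio_ge0 : 0 <= k%:R * (M - 1) / (M + 1).
  by apply: divr_ge0; [rewrite mulr_ge0 ?(ltW M1_gt0) | rewrite ltW ?addr_gt0].
apply: le_trans (lee_wpmul2l _ opt_tight_le) _; first by rewrite lee_fin.
apply: le_trans Rev_tight_ge; rewrite -EFinM lee_fin.
suff -> : k%:R * (M - 1) / (M + 1) * ((M + 1) / ((M - 1) * \sum_(j < k) M ^+ j)) =
    k%:R / \sum_(j < k) M ^+ j by [].
by field; rewrite !gt_eqF // addr_gt0.
Qed.

End tight_instance.

Theorem theorem3 (R : realType) (k : nat) :
  (forall (P : probability (R * R)%type R) (p : R -> R),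
      type_distribution P -> kstep_scheme k p -> tstar_exists p ->
      (Rev P p <= k%:R%:E * opt_fixed_rev P)%E) /\
  ((0 < k)%N -> forall delta : R, 0 < delta ->
      exists (P : probability (R * R)%type R) (p : R -> R),
        [/\ type_distribution P, kstep_scheme k p, tstar_exists p,
            (0 < opt_fixed_rev P)%E &
            ((k%:R - delta)%:E * opt_fixed_rev P <= Rev P p)%E]).
Proof.
split=> [P p P_neg0 kp _|k_gt0 delta delta_gt0]; first exact: Rev_le_kstep_opt.
pose M := 2 * k%:R / delta + 2.
have M_ge2 : 2 <= M by rewrite lerDr divr_ge0 ?mulr_ge0 ?ler0n ?ltW.
exists (tight_distribution k M_ge2), (tight_scheme M k); split.
- exact: type_distribution_tight.
- exact: kstep_step_scheme _ k_gt0 (tight_price_le M_ge2).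
- exact: tstar_exists_step_scheme _ k_gt0 (tight_time0 M) (tight_time_lt M_ge2).
- exact: opt_tight_gt0.
apply: le_trans (tight_Rev_ratio M_ge2 k_gt0); apply: lee_wpmul2r.
  exact: opt_fixed_rev_ge0.
(* [delta * M >= 2 k] gives [k - delta <= k (M - 1) / (M + 1)]. *)
have dM : delta * M = 2 * k%:R + 2 * delta by rewrite /M; field; rewrite gt_eqF.
have M1_gt0 : 0 < M + 1 by rewrite ltr_wpDl // (le_trans _ M_ge2).
rewrite lee_fin ler_pdivlMr //; nra.
Qed.
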